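(* Let $\Psi=\{\psi_i\}_{i\in I}$ be a lower frame sequence in a separable Hilbert space $\mathcal{H}$ with canonical dual $\widetilde\Psi=\{\widetilde\psi_i\}$, and let $j\in I$. Then: (1) if $\langle\psi_j,\widetilde\psi_j\rangle\ne1$, then $\{\psi_k\}_{k\ne j}$ is a lower frame sequence for $\mathcal{H}$; (2) if $\langle\psi_j,\widetilde\psi_j\rangle=1$, then $\{\psi_k\}_{k\ne j}$ is incomplete in $\mathcal{H}$.
   Context: $I$ is countable. $\mathcal{D}(C_\Psi)=\{f\in\mathcal{H}:\{\langle f,\psi_i\rangle\}_i\in\ell^2\}$, $\mathcal{H}_\Psi:=\overline{\mathcal{D}(C_\Psi)}$, $\pi_{\mathcal{H}_\Psi}$ the orthogonal projection onto $\mathcal{H}_\Psi$. A sequence $\Phi=\{\varphi_i\}$ is a lower frame sequence if there is $A>0$ with $A\|f\|^2\le\sum_i|\langle f,\varphi_i\rangle|^2$ for all $f$ with $\{\langle f,\varphi_i\rangle\}\in\ell^2$. A sequence is complete if its closed linear span is $\mathcal{H}$. With $C^r_\Psi:\mathcal{D}(C_\Psi)\subseteq\mathcal{H}_\Psi\to\ell^2$, $C^r_\Psi f=\{\langle f,\psi_i\rangle\}$, the generalized frame operator $\Gamma_\Psi=(C^r_\Psi)^*C^r_\Psi$ is, for a lower frame sequence, bijective onto $\mathcal{H}_\Psi$ with bounded inverse; the canonical dual is $\widetilde\psi_i:=\Gamma_\Psi^{-1}\pi_{\mathcal{H}_\Psi}\psi_i$. *)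

From HB Require Import structures.
From mathcomp Require Import all_boot all_order all_algebra.
From mathcomp Require Import all_classical all_reals.
From mathcomp Require Import ereal esum.
From mathcomp Require Import complex.

Set Implicit Arguments.
Unset Strict Implicit.
Unset Printing Implicit Defensive.

Import Order.TTheory GRing.Theory Num.Theory.
Local Open Scope classical_set_scope.
Local Open Scope ring_scope.

Section Hilbert.
Variables (R : realType) (H : lmodType R[i]) (ip : H -> H -> R[i]).

Definition hnorm (x : H) : R := Num.sqrt (complex.Re (ip x x)).

Definition hcauchy (u : nat -> H) : Prop :=
  forall e : R, 0 < e -> exists N : nat, forall m n : nat,
    (N <= m)%N -> (N <= n)%N -> hnorm (u m - u n) < e.

Definition hconverges (u : nat -> H) (x : H) : Prop :=
  forall e : R, 0 < e -> exists N : nat, forall n : nat,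
    (N <= n)%N -> hnorm (u n - x) < e.

Record is_hilbert : Prop := {
  ip_linear : forall (a : R[i]) (x y z : H), ip (a *: x + y) z = a * ip x z + ip y z;
  ip_conjsym : forall x y : H, ip y x = conjc (ip x y);
  ip_pos : forall x : H, 0 <= complex.Re (ip x x);
  ip_def : forall x : H, ip x x = 0 -> x = 0;
  ip_complete : forall u : nat -> H, hcauchy u -> exists x : H, hconverges u x
}.

Definition separable : Prop :=
  exists d : nat -> H, forall (x : H) (e : R), 0 < e ->
    exists n : nat, hnorm (x - d n) < e.

Definition ell2 (I : choiceType) (c : I -> R[i]) : Prop :=
  (\esum_(i in [set: I]) (((Normc.normc (c i)) ^+ 2)%:E) < +oo)%E.

(* domain of the analysis operator C_Psi *)
Definition dom_C (I : choiceType) (psi : I -> H) (f : H) : Prop :=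
  ell2 (fun i => ip f (psi i)).

Definition in_HPsi (I : choiceType) (psi : I -> H) (x : H) : Prop :=
  forall e : R, 0 < e -> exists y : H, dom_C psi y /\ hnorm (x - y) < e.

Definition lower_frame_seq (I : choiceType) (phi : I -> H) : Prop :=
  exists A : R, 0 < A /\ forall f : H, dom_C phi f ->
    ((A * hnorm f ^+ 2)%:E <= \esum_(i in [set: I]) (((Normc.normc (ip f (phi i))) ^+ 2)%:E))%E.

Definition complete_seq (I : choiceType) (phi : I -> H) : Prop :=
  forall (x : H) (e : R), 0 < e ->
    exists (s : seq I) (c : I -> R[i]), hnorm (x - \sum_(i <- s) c i *: phi i) < e.

Definition has_usum (I : choiceType) (a : I -> R[i]) (s : R[i]) : Prop :=
  forall e : R, 0 < e -> exists F0 : seq I, forall F : seq I,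
    uniq F -> {subset F0 <= F} -> Normc.normc (s - \sum_(i <- F) a i) < e.

(* Gamma_Psi f = h, where Gamma_Psi = (C^r_Psi)^* C^r_Psi :
   f in D(C_Psi), h in H_Psi and for all g in D(C_Psi),
   <C g, C f>_{l^2} = <g, h>. *)
Definition frame_op_rel (I : choiceType) (psi : I -> H) (f h : H) : Prop :=
  [/\ dom_C psi f, in_HPsi psi h &
      forall g : H, dom_C psi g ->
        has_usum (fun i => ip g (psi i) * conjc (ip f (psi i))) (ip g h)].

Definition is_proj (I : choiceType) (psi : I -> H) (x p : H) : Prop :=
  in_HPsi psi p /\ forall g : H, in_HPsi psi g -> ip (x - p) g = 0.

(* d = tilde psi_j = Gamma_Psi^{-1} pi_{H_Psi} psi_j *)
Definition canonical_dual (I : choiceType) (psi : I -> H) (j : I) (d : H) : Prop :=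
  exists p : H, is_proj psi (psi j) p /\ frame_op_rel psi d p.

End Hilbert.

Definition remove_one (R : realType) (H : lmodType R[i]) (I : choiceType)
  (psi : I -> H) (j : I) : {k : I | k != j} -> H := fun k => psi (sval k).
Arguments remove_one {R H I} psi j _.

(* Let w := <psi_j, dual_j>.  Because dual_j satisfies the defining relation of
   Gamma_Psi dual_j = pi psi_j, every f in D(C_Psi) obeys the reproducing identity
   <f, psi_j> = sum_i <f, psi_i> conj <dual_j, psi_i>.  Moving the j-th term to the
   left gives <f, psi_j> (1 - w) = sum_(i <> j) <f, psi_i> conj <dual_j, psi_i>, so by
   Cauchy-Schwarz  |<f, psi_j>|^2 |1 - w|^2 <= B * sum_(i <> j) |<f, psi_i>|^2  with
   B = sum_i |<dual_j, psi_i>|^2.  If w <> 1 the missing coefficient is thus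
   controlled and the lower bound A survives as A / (1 + B / |1 - w|^2).  If w = 1,
   the identity for f = dual_j reads sum_i |<dual_j, psi_i>|^2 = 1 with j-th term 1,
   so dual_j <> 0 is orthogonal to every psi_k, k <> j. *)

From HB Require Import structures.
From mathcomp Require Import all_boot all_order all_algebra.
From mathcomp Require Import all_classical all_reals.
From mathcomp Require Import ereal esum.
From mathcomp Require Import complex.
From mathcomp Require Import ring lra.

Set Implicit Arguments.
Unset Strict Implicit.
Unset Printing Implicit Defensive.
Import Order.TTheory GRing.Theory Num.Theory.
Local Open Scope classical_set_scope.
Local Open Scope ring_scope.

Import Normc.

Section ComplexNorm.
Variable R : realType.
Implicit Types x y : R[i].

Lemma normc_ge0 x : 0 <= normc x.
Proof. by case: x => a b; rewrite /= sqrtr_ge0. Qed.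

Lemma normcJ x : normc (conjc x) = normc x.
Proof. by case: x => a b; rewrite /= sqrrN. Qed.

Lemma mulcJ_normc x : x * conjc x = (normc x ^+ 2)%:C%C.
Proof.
case: x => a b /=; rewrite sqr_sqrtr ?addr_ge0 ?sqr_ge0 //.
by apply/eqP; rewrite eq_complex /= !expr2; apply/andP; split; apply/eqP; ring.
Qed.

Lemma normc_real (r : R) : normc r%:C%C = `|r|.
Proof. by rewrite /= expr0n /= addr0 sqrtr_sqr. Qed.

Lemma normc_sum (T : Type) (s : seq T) (F : T -> R[i]) :
  normc (\sum_(i <- s) F i) <= \sum_(i <- s) normc (F i).
Proof.
elim: s => [|x s IH]; first by rewrite !big_nil normc0.
by rewrite !big_cons (le_trans (le_normcD _ _)) ?lerD.
Qed.

End ComplexNorm.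

Section UnconditionalSums.
Variable R : realType.

Lemma has_usum_extend (T : choiceType) (a : T -> R[i]) (s : R[i]) (F : seq T) (e : R) :
  has_usum a s -> uniq F -> 0 < e ->
  exists G : seq T, [/\ uniq G, {in G, forall i, i \notin F} &
    normc (s - (\sum_(i <- F) a i + \sum_(i <- G) a i)) < e].
Proof.
move=> hs uF e0; have [F0 hF0] := hs e e0.
exists [seq i <- undup F0 | i \notin F]; split.
- by rewrite filter_uniq ?undup_uniq.
- by move=> i; rewrite mem_filter => /andP[].
- rewrite -big_cat; apply: hF0.
    rewrite cat_uniq uF filter_uniq ?undup_uniq // andbT.
    by apply/hasPn => i; rewrite mem_filter => /andP[].
  by move=> i iF0; rewrite mem_cat mem_filter mem_undup iF0 andbT; case: (i \in F).
Qed.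

Lemma has_usum_ge_sum (T : choiceType) (a : T -> R) (s : R) (F : seq T) :
  (forall i, 0 <= a i) -> has_usum (fun i => (a i)%:C%C) s%:C%C ->
  uniq F -> \sum_(i <- F) a i <= s.
Proof.
move=> a0 hs uF; apply/ler_addgt0Pr => e e0.
have [G [_ _]] := has_usum_extend hs uF e0.
rewrite -!rmorph_sum -rmorphD -rmorphB normc_real => close.
have : 0 <= \sum_(i <- G) a i by exact: sumr_ge0.
have := ler_norm (\sum_(i <- F) a i + \sum_(i <- G) a i - s).
rewrite distrC; lra.
Qed.

End UnconditionalSums.

Section ExtendedSums.
Variable R : realType.

Lemma sum_le_esum (T : choiceType) (S : set T) (g : T -> R) (F : seq T) :
  (forall i, 0 <= g i) -> uniq F -> {subset F <= S} ->
  ((\sum_(i <- F) g i)%:E <= \esum_(i in S) (g i)%:E)%E.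
Proof.
move=> g0 uF FS; apply: esum_ge; exists [set` F].
  by split=> [|i /FS]; [exact: finite_seq | rewrite inE].
by rewrite -fsbig_seq // sumEFin.
Qed.

Lemma esum_sig_neq (T : choiceType) (j : T) (g : T -> \bar R) :
  \esum_(k in [set: {k : T | k != j}]) g (sval k) = \esum_(i in ~` [set j]) g i.
Proof.
rewrite -(esum_image _ _ g) => [|x y _ _]; last exact: val_inj.
congr esum; apply/seteqP; split=> [_ [[x xj] _ <-] /= xE|x /eqP xj].
  by rewrite xE eqxx in xj.
by exists (exist _ x xj).
Qed.

Lemma esum_setT_split (T : choiceType) (j : T) (g : T -> \bar R) :
  (forall i, (0 <= g i)%E) ->
  \esum_(i in [set: T]) g i = (g j + \esum_(i in ~` [set j]) g i)%E.
Proof.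
move=> g0; rewrite (esumID [set j]) => [|i _]; last exact: g0.
by rewrite !setTI esum_set1.
Qed.

End ExtendedSums.

Section CauchySchwarz.
Variable R : realType.

Lemma amgm_le (a b t : R) : 0 < t -> a * b <= (t * a ^+ 2 + b ^+ 2 / t) / 2.
Proof.
move=> t0; set q := b ^+ 2 / t; have qt : q * t = b ^+ 2 by rewrite mulfVK ?gt_eqF.
have sq_ge0 := sqr_ge0 (t * a - b); rewrite -(@ler_pM2r _ t) //; nra.
Qed.

Lemma sqr_le_mul_of_amgm (u S B : R) : 0 <= u -> 0 <= S -> 0 <= B ->
  (forall t, 0 < t -> u <= (t * S + B / t) / 2) -> u ^+ 2 <= S * B.
Proof.
move=> u0 S0 B0 hu.
have [->|u_neq0] := eqVneq u 0; first by rewrite expr0n mulr_ge0.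
have u_gt0 : 0 < u by rewrite lt_def u_neq0 u0.
have [S_eq0|S_neq0] := eqVneq S 0.
  (* t := (B + 1) / u makes the bound strictly smaller than u *)
  have B1 : 0 < B + 1 by rewrite ltr_wpDl.
  have := hu ((B + 1) / u) (divr_gt0 B1 u_gt0); rewrite S_eq0 mulr0 add0r.
  have -> : B / ((B + 1) / u) = B / (B + 1) * u by field; rewrite !gt_eqF.
  have : B / (B + 1) < 1 by rewrite ltr_pdivrMr // mul1r ltrDl.
  nra.
have S_gt0 : 0 < S by rewrite lt_def S_neq0 S0.
have := hu (u / S) (divr_gt0 u_gt0 S_gt0); rewrite mulfVK ?gt_eqF //.
have -> : B / (u / S) = B * S / u by field; rewrite !gt_eqF.
have : B * S / u * u = B * S by rewrite mulfVK ?gt_eqF.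
nra.
Qed.

Lemma cauchy_schwarz_seq (T : Type) (s : seq T) (a b : T -> R) :
  (forall i, 0 <= a i) -> (forall i, 0 <= b i) ->
  \sum_(i <- s) a i * b i <= Num.sqrt (\sum_(i <- s) a i ^+ 2) * Num.sqrt (\sum_(i <- s) b i ^+ 2).
Proof.
move=> a0 b0.
have sa0 : 0 <= \sum_(i <- s) a i ^+ 2 by apply: sumr_ge0 => i _; exact: sqr_ge0.
have sb0 : 0 <= \sum_(i <- s) b i ^+ 2 by apply: sumr_ge0 => i _; exact: sqr_ge0.
rewrite -sqrtrM // -(ger0_norm (sumr_ge0 _ _)); last by move=> i _; exact: mulr_ge0.
rewrite -sqrtr_sqr ler_sqrt ?mulr_ge0 //; apply: sqr_le_mul_of_amgm => // [|t t0].
  by rewrite sumr_ge0 // => i _; rewrite mulr_ge0.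
rewrite mulr_sumr mulr_suml -big_split /= mulr_suml; apply: ler_sum => i _.
exact: amgm_le.
Qed.

End CauchySchwarz.

Section InnerProductSpace.
Variables (R : realType) (H : lmodType R[i]) (ip : H -> H -> R[i]).
Hypothesis hH : is_hilbert ip.

Lemma ipDl x y z : ip (x + y) z = ip x z + ip y z.
Proof. by have := ip_linear hH 1 x y z; rewrite scale1r mul1r. Qed.

Lemma ip0l z : ip 0 z = 0.
Proof. by apply: (addrI (ip 0 z)); rewrite -ipDl !addr0. Qed.

Lemma ipZl a x z : ip (a *: x) z = a * ip x z.
Proof. by have := ip_linear hH a x 0 z; rewrite addr0 ip0l addr0. Qed.

Lemma ipBl x y z : ip (x - y) z = ip x z - ip y z.
Proof. by rewrite ipDl -scaleN1r ipZl mulN1r. Qed.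

Lemma ip_suml (T : Type) (s : seq T) (F : T -> H) z :
  ip (\sum_(i <- s) F i) z = \sum_(i <- s) ip (F i) z.
Proof. by elim: s => [|x s IH]; rewrite ?big_nil ?ip0l // !big_cons ipDl IH. Qed.

Lemma ip0r z : ip z 0 = 0.
Proof. by rewrite (ip_conjsym hH) ip0l conjc0. Qed.

Lemma ipBr x y z : ip z (x - y) = ip z x - ip z y.
Proof. by rewrite !(ip_conjsym hH _ z) ipBl rmorphB. Qed.

Lemma ip_orthC x y : ip x y = 0 -> ip y x = 0.
Proof. by move=> xy; rewrite (ip_conjsym hH) xy conjc0. Qed.

Lemma ipxx_real x : ip x x = (complex.Re (ip x x))%:C%C.
Proof.
have := ip_conjsym hH x x; case: (ip x x) => a b /= [] b_eq.
by apply/eqP; rewrite eq_complex /= eqxx; apply/eqP; lra.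
Qed.

Lemma hnorm_gt0 x : x != 0 -> 0 < hnorm ip x.
Proof.
move=> x_neq0; rewrite /hnorm sqrtr_gt0 lt_def (ip_pos hH) andbT.
apply: contra x_neq0 => /eqP Re_eq0; apply/eqP; apply: (ip_def hH).
by rewrite ipxx_real Re_eq0.
Qed.

Lemma hnorm_le_subr_orth v w : ip w v = 0 -> hnorm ip v <= hnorm ip (v - w).
Proof.
move=> wv; have vw := ip_orthC wv.
rewrite ler_sqrt ?(ip_pos hH) // ipBl !ipBr wv vw !subr0.
by have := ip_pos hH w; case: (ip w w) => a1 b1; case: (ip v v) => a2 b2 /=; lra.
Qed.

Lemma orthogonal_not_complete (I : choiceType) (phi : I -> H) v :
  v != 0 -> (forall k, ip (phi k) v = 0) -> ~ complete_seq ip phi.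
Proof.
move=> v_neq0 v_orth /(_ v _ (hnorm_gt0 v_neq0)) [s [c]]; apply/negP; rewrite -leNgt.
apply: hnorm_le_subr_orth; rewrite ip_suml big1 // => i _.
by rewrite ipZl v_orth mulr0.
Qed.

Lemma dom_C_in_HPsi (I : choiceType) (psi : I -> H) x :
  dom_C ip psi x -> in_HPsi ip psi x.
Proof.
move=> x_dom e e0; exists x; split => //.
by rewrite subrr /hnorm ip0l /= sqrtr0.
Qed.

Lemma is_proj_ip (I : choiceType) (psi : I -> H) x p g :
  is_proj ip psi x p -> in_HPsi ip psi g -> ip g p = ip g x.
Proof.
move=> [_ p_orth] /p_orth; rewrite ipBl => /eqP; rewrite subr_eq0 => /eqP xp.
by rewrite (ip_conjsym hH p) (ip_conjsym hH x) xp.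
Qed.

Section CanonicalDual.
Variables (I : choiceType) (psi : I -> H) (j : I) (d : H).
Hypothesis hd : canonical_dual ip psi j d.

Lemma canonical_dual_dom : dom_C ip psi d.
Proof. by case: hd => p [_ []]. Qed.

Lemma canonical_dual_expansion f : dom_C ip psi f ->
  has_usum (fun i => ip f (psi i) * conjc (ip d (psi i))) (ip f (psi j)).
Proof.
case: hd => p [p_proj [_ _ reproducing]] f_dom.
by rewrite -(is_proj_ip p_proj (dom_C_in_HPsi f_dom)); exact: reproducing.
Qed.

Lemma canonical_dual_orth_of_ip1 : ip (psi j) d = 1 ->
  forall k, k != j -> ip (psi k) d = 0.
Proof.
move=> w1 k kj; set a := fun i => normc (ip d (psi i)) ^+ 2.
have a_ge0 i : 0 <= a i by exact: sqr_ge0.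
have dj1 : ip d (psi j) = 1 by rewrite (ip_conjsym hH) w1 conjc1.
have a_usum : has_usum (fun i => (a i)%:C%C) (ip d (psi j)).
  have := canonical_dual_expansion canonical_dual_dom.
  by congr has_usum; apply: funext => i; rewrite mulcJ_normc.
rewrite dj1 in a_usum.
have aj : a j = 1 by rewrite /a dj1 normc1 expr1n.
have := has_usum_ge_sum (F := [:: j; k]) (s := 1) a_ge0 a_usum.
rewrite /= inE eq_sym kj !big_cons big_nil aj addr0 => /(_ isT) ak_le0.
have /eqP : a k = 0 by apply/eqP; rewrite eq_le a_ge0 andbT; lra.
by rewrite sqrf_eq0 => /eqP /eq0_normc; exact: ip_orthC.
Qed.

Lemma remove_one_not_complete : ip (psi j) d = 1 -> ~ complete_seq ip (remove_one psi j).
Proof.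
move=> w1; apply: (orthogonal_not_complete (v := d)).
  by apply/eqP => d0; move/eqP: w1; rewrite d0 ip0r // eq_sym oner_eq0.
by case=> k kj; exact: canonical_dual_orth_of_ip1.
Qed.

Lemma canonical_dual_coef_bound f (S B : R) : dom_C ip psi f ->
  \esum_(i in ~` [set j]) (normc (ip f (psi i)) ^+ 2)%:E = S%:E ->
  \esum_(i in [set: I]) (normc (ip d (psi i)) ^+ 2)%:E = B%:E ->
  (normc (ip f (psi j)) * normc (1 - ip (psi j) d)) ^+ 2 <= S * B.
Proof.
move=> f_dom eS eB; set a := ip f (psi j); set w := ip (psi j) d.
have S_ge0 : 0 <= S by rewrite -lee_fin -eS esum_ge0 // => i _; rewrite lee_fin sqr_ge0.
have u_ge0 : 0 <= normc a * normc (1 - w) by rewrite mulr_ge0 ?normc_ge0.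
rewrite -[X in X ^+ 2]ger0_norm // -ler_sqrt ?mulr_ge0 ?sqrtr_sqr ?ger0_norm //; last first.
  by rewrite -lee_fin -eB esum_ge0 // => i _; rewrite lee_fin sqr_ge0.
apply/ler_addgt0Pr => e e0.
have [G [G_uniq G_neqj close]] := has_usum_extend (F := [:: j])
  (canonical_dual_expansion f_dom) isT e0.
rewrite big_seq1 -(ip_conjsym hH) -/a -/w in close.
set z := \sum_(i <- G) _ in close.
have tri : normc a * normc (1 - w) <= normc (a - (a * w + z)) + normc z.
  by rewrite -normcM (_ : a * (1 - w) = a - (a * w + z) + z) ?le_normcD //; ring.
have sumG (g : I -> R) (E : set I) (r : R) : (forall i, 0 <= g i) -> {subset G <= E} ->
    \esum_(i in E) (g i)%:E = r%:E -> \sum_(i <- G) g i <= r.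
  by move=> g0 GE eE; rewrite -lee_fin -eE sum_le_esum.
have CS : normc z <= Num.sqrt S * Num.sqrt B.
  apply: (le_trans (normc_sum _ _)).
  under eq_bigr do rewrite normcM normcJ.
  apply: le_trans (cauchy_schwarz_seq G
    (fun i => normc_ge0 (ip f (psi i))) (fun i => normc_ge0 (ip d (psi i)))) _.
  apply: ler_pM; rewrite ?sqrtr_ge0 // ler_wsqrtr //.
    apply: (sumG _ (~` [set j])) eS => [i|i /G_neqj]; first exact: sqr_ge0.
    by rewrite !inE => /eqP.
  by apply: (sumG _ setT) eB => [i|i _]; [exact: sqr_ge0 | rewrite inE].
rewrite sqrtrM //; lra.
Qed.

Lemma remove_one_lower_frame : lower_frame_seq ip psi -> ip (psi j) d != 1 ->
  lower_frame_seq ip (remove_one psi j).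
Proof.
move=> [A [A_gt0 A_lower]] w_neq1.
set c := normc (1 - ip (psi j) d).
have c_gt0 : 0 < c.
  rewrite lt_def normc_ge0 andbT; apply: contra w_neq1 => /eqP /eq0_normc /eqP.
  by rewrite subr_eq0 eq_sym.
set sum_d := \esum_(i in [set: I]) (normc (ip d (psi i)) ^+ 2)%:E.
have sum_d_ge0 : (0 <= sum_d)%E by apply: esum_ge0 => i _; rewrite lee_fin sqr_ge0.
set B := fine sum_d; have eB : sum_d = B%:E.
  by rewrite fineK // ge0_fin_numE //; exact: canonical_dual_dom.
have B_ge0 : 0 <= B by exact: fine_ge0.
have K_gt0 : 0 < 1 + B / c ^+ 2 by have := divr_ge0 B_ge0 (sqr_ge0 c); lra.
exists (A / (1 + B / c ^+ 2)); split; first by rewrite divr_gt0.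
move=> f; set g := fun i => normc (ip f (psi i)) ^+ 2.
have g_ge0 i : (0 <= (g i)%:E)%E by rewrite lee_fin sqr_ge0.
rewrite /dom_C /ell2 (esum_sig_neq j (fun i => (g i)%:E)) => f_dom'.
have rest_ge0 : (0 <= \esum_(i in ~` [set j]) (g i)%:E)%E by exact: esum_ge0.
set S := fine (\esum_(i in ~` [set j]) (g i)%:E).
have eS : \esum_(i in ~` [set j]) (g i)%:E = S%:E by rewrite fineK // ge0_fin_numE.
have f_dom : dom_C ip psi f.
  by rewrite /dom_C /ell2 (esum_setT_split j g_ge0) eS -EFinD ltry.
have := A_lower f f_dom; rewrite (esum_setT_split j g_ge0) eS -EFinD lee_fin => f_lower.
have := canonical_dual_coef_bound f_dom eS eB; rewrite exprMn -/c => gj_bound.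
rewrite lee_fin mulrAC ler_pdivrMr // mulrDr mulr1 mulrA.
have : g j <= S * B / c ^+ 2 by rewrite ler_pdivlMr // exprn_gt0.
lra.
Qed.

End CanonicalDual.
End InnerProductSpace.

Theorem theorem6p15 (R : realType) (H : lmodType R[i]) (ip : H -> H -> R[i])
  (hH : is_hilbert ip) (hsep : separable ip)
  (I : countType) (psi : I -> H) (hpsi : lower_frame_seq ip psi)
  (j : I) (dj : H) (hdj : canonical_dual ip psi j dj) :
  (ip (psi j) dj != 1 -> lower_frame_seq ip (remove_one psi j)) /\
  (ip (psi j) dj = 1 -> ~ complete_seq ip (remove_one psi j)).
Proof.
split; first exact: remove_one_lower_frame.
exact: remove_one_not_complete.
Qed.
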